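(* Let $A_1,\ldots,A_r$ be non-empty, pairwise disjoint finite sets and $L=\partial\Delta^{A_1}*\cdots*\partial\Delta^{A_r}$. Then: (1) $\mathbb{R}\mathcal{Z}_L=S^{|A_1|-1}\times\cdots\times S^{|A_r|-1}$ (via $\mathbb{R}\mathcal{Z}_{\partial\Delta^{A_i}}=S^{|A_i|-1}$); (2) if $T=\{(x_1,\ldots,x_r)\in S^{|A_1|-1}\times\cdots\times S^{|A_r|-1}\mid x_i\text{ is the basepoint for some }i\}$ is the fat wedge, then the natural inclusion $T\to\mathbb{R}\mathcal{Z}_L^{|A_1|+\cdots+|A_r|-1}$ is a homotopy equivalence.
   Context: $\Delta^S$ is the full simplex on $S$, $\partial\Delta^S$ its boundary (proper subsets of $S$), $*$ the join. For a simplicial complex $K$ on vertex set $V$ with $|V|=n$, the real moment-angle complex is $\mathbb{R}\mathcal{Z}_K=\bigcup_{\sigma\in K}\prod_{v\in V}Y_v\subset (CS^0)^V$ where $Y_v=CS^0$ (reduced cone, an interval) if $v\in\sigma$ and $Y_v=S^0$ otherwise, with basepoint the basepoint of $S^0$. Its fat wedge filtration is $\mathbb{R}\mathcal{Z}_K^i=\{(x_v)\in\mathbb{R}\mathcal{Z}_K\mid\text{at least }n-i\text{ of the }x_v\text{ are the basepoint}\}$, $0\le i\le n$. The basepoint of $S^{|A_i|-1}=\mathbb{R}\mathcal{Z}_{\partial\Delta^{A_i}}$ is the point with all coordinates at the basepoint. *)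

From HB Require Import structures.
From mathcomp Require Import all_boot all_order all_algebra.
From mathcomp Require Import all_classical all_reals all_analysis.
Set Implicit Arguments.
Unset Strict Implicit.
Unset Printing Implicit Defensive.
Import Order.TTheory GRing.Theory Num.Theory.
Import numFieldNormedType.Exports.

Definition bdry_simplex (V : finType) (S : {set V}) : {set {set V}} :=
  [set s : {set V} | s \proper S].

Definition sjoin (V : finType) (K1 K2 : {set {set V}}) : {set {set V}} :=
  [set s1 :|: s2 | s1 in K1, s2 in K2].

Definition join_bdry (V : finType) (r : nat) (A : 'I_r -> {set V})
  : {set {set V}} :=
  \big[@sjoin V/[set (@finset.set0 V)]]_(i < r) bdry_simplex (A i).

Definition vert (V : finType) (A : {set V}) := {v : V | v \in A}.

Local Open Scope classical_set_scope.
Local Open Scope ring_scope.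

(** The reduced cone CS^0 is modelled as the
    interval [0,1] with S^0 = {0,1} and basepoint 0 (the cone point). *)
Definition RZ (R : realType) (V : finType) (K : {set {set V}})
  : set {ptws V -> R} :=
  [set x | exists2 s, s \in K &
     forall v, (v \in s -> 0 <= x v <= 1) /\
               (v \notin s -> x v = 0 \/ x v = 1)].
Arguments RZ R {V} K.

Definition RZfw (R : realType) (V : finType) (K : {set {set V}}) (i : nat)
  : set {ptws V -> R} :=
  [set x | RZ R K x /\ (#|V| - i <= #|[set v | x v == 0%R]|)%N].
Arguments RZfw R {V} K i.

Definition fat_wedge (R : realType) (V : finType) (r : nat)
  (A : 'I_r -> {set V}) : set {ptws V -> R} :=
  [set x | RZ R (join_bdry A) x /\
           exists i : 'I_r, forall v, v \in A i -> x v = 0].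
Arguments fat_wedge R {V r} A.

Definition homotopic_on (R : realType) (X Y : topologicalType)
  (A : set X) (B : set Y) (f g : X -> Y) : Prop :=
  exists H : R * X -> Y,
    [/\ {within [set p : R * X | 0 <= p.1 <= 1 /\ A p.2], continuous H},
        (forall t x, 0 <= t <= 1 -> A x -> B (H (t, x))),
        (forall x, A x -> H (0, x) = f x) &
        (forall x, A x -> H (1, x) = g x)].
Arguments homotopic_on R {X Y} A B f g.

Definition homotopy_equivalence_on (R : realType) (X Y : topologicalType)
  (A : set X) (B : set Y) (f : X -> Y) : Prop :=
  [/\ {within A, continuous f}, (forall x, A x -> B (f x)) &
      exists g : Y -> X,
        [/\ {within B, continuous g}, (forall y, B y -> A (g y)),
            homotopic_on R A A (g \o f) id &
            homotopic_on R B B (f \o g) id]].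
Arguments homotopy_equivalence_on R {X Y} A B f.

(* RZ_L is the product of the spheres RZ_{bdry A_i}: a point lies in the i-th
   sphere iff its coordinates on A_i are in [0,1] and one of them is 0 or 1.
   The stage RZ_L^{n-1} consists of the points of this product having some
   coordinate 0.  Deform it blockwise: each block is pushed towards its
   basepoint at a speed governed by the minimum of its coordinates.  The
   deformation stays in the product of spheres, fixes the coordinates equal
   to 0, hence preserves both RZ_L^{n-1} and the fat wedge, and at its end
   collapses every block containing a 0 to the basepoint, landing in the fat
   wedge. *)

From HB Require Import structures.
From mathcomp Require Import all_boot all_order all_algebra.
From mathcomp Require Import all_classical all_reals all_analysis.
From mathcomp Require Import lra.
Set Implicit Arguments.
Unset Strict Implicit.
Unset Printing Implicit Defensive.

Import Order.TTheory GRing.Theory Num.Theory.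
Import numFieldNormedType.Exports.

Local Open Scope ring_scope.

Lemma mem_big_sjoin (V : finType) (I : eqType) (K : I -> {set {set V}})
    (l : seq I) (s : {set V}) :
  uniq l ->
  s \in \big[@sjoin V/[set (@finset.set0 V)]%SET]_(i <- l) K i <->
  exists f : I -> {set V},
    (forall i, i \in l -> f i \in K i) /\ s = (\bigcup_(i <- l) f i)%SET.
Proof.
elim: l s => [|i l IH] s /=.
  move=> _; rewrite big_nil finset.in_set1; split.
    by move/eqP->; exists (fun=> finset.set0); rewrite big_nil.
  by case=> f [_ ->]; rewrite big_nil.
case/andP=> il ul; rewrite big_cons; split.
  case/imset2P => s1 s2 s1K /IH [] // f [fK ->] ->.
  exists (fun j => if j == i then s1 else f j); split.
    by move=> j; rewrite inE; case: eqP => [->//|_ /= /fK].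
  rewrite big_cons eqxx; congr (_ :|: _); apply: eq_big_seq => j jl.
  by case: eqP jl il => // -> ->.
case=> f [fK ->]; rewrite big_cons; apply/imset2P.
exists (f i) (\bigcup_(j <- l) f j)%SET => //.
  by apply: fK; rewrite inE eqxx.
by apply/IH => //; exists f; split => // j jl; apply: fK; rewrite inE jl orbT.
Qed.

Lemma mem_join_bdry (V : finType) (r : nat) (A : 'I_r -> {set V}) s :
  s \in join_bdry A <-> exists f : 'I_r -> {set V},
     (forall i, f i \proper A i) /\ s = (\bigcup_(i < r) f i)%SET.
Proof.
rewrite /join_bdry mem_big_sjoin ?index_enum_uniq //.
split=> -[f [fA ->]]; exists f; split=> // i.
  by have := fA i (mem_index_enum i); rewrite inE.
by rewrite inE.
Qed.

Lemma card_bigcup_disjoint (V : finType) (I : finType) (A : I -> {set V}) :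
  (forall i j, i != j -> [disjoint A i & A j]%B) ->
  #|(\bigcup_i A i)%SET| = (\sum_i #|A i|)%N.
Proof.
move=> Adis.
transitivity (\sum_(v : V) \sum_i (v \in A i : nat))%N; last first.
  rewrite exchange_big; apply: eq_bigr => i _.
  by rewrite -sum1_card [RHS]big_mkcond.
rewrite -sum1_card [LHS]big_mkcond; apply: eq_bigr => v _.
case: bigcupP => [[j _ vj]|vA]; last first.
  rewrite big1 // => i _.
  by case: (boolP (v \in A i)) => // vi; case: vA; exists i.
rewrite (bigD1 j) //= vj big1 // => i ij.
by rewrite (disjointFl (Adis i j ij) vj).
Qed.

Section Spheres.
Variables (R : realType) (V : finType).

Definition in_sphere (S : {set V}) (x : V -> R) : Prop :=
  (forall v, v \in S -> 0 <= x v <= 1) /\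
  exists2 v, v \in S & x v = 0 \/ x v = 1.

Lemma RZ_bdry_vertE (S : {set V}) (x : V -> R) :
  RZ R (bdry_simplex [set: vert S]) (fun a => x (val a)) <-> in_sphere S x.
Proof.
split.
  case=> s; rewrite inE properT => sT xs.
  have /fintype.subsetPn[a _ an] : ~~ ([set: vert S] \subset s).
    by rewrite finset.subTset.
  split; last by exists (val a); [exact: valP | exact: (xs a).2].
  move=> v vS; have [/(_ _)/= x01 x0or1] := xs (exist _ v vS).
  case: (boolP (exist _ v vS \in s)) => [/x01 //| /x0or1].
  by case=> ->; rewrite ?lexx ?ler01.
case=> x01 [v vS xv]; exists [set~ (exist _ v vS : vert S)].
  rewrite inE properT; apply/eqP => /setP /(_ (exist _ v vS)).
  by rewrite !inE eqxx.
move=> a; split=> [_|]; first exact/x01/valP.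
by rewrite !inE negbK => /eqP ->.
Qed.

Variables (r : nat) (A : 'I_r -> {set V}).
Hypothesis A_disjoint : forall i j, i != j -> [disjoint A i & A j]%B.
Hypothesis A_cover : (\bigcup_(i < r) A i = [set: V])%SET.

Lemma mem_cover v : exists i, v \in A i.
Proof.
have : v \in [set: V] by rewrite finset.in_setT.
by rewrite -A_cover => /bigcupP[i _ vi]; exists i.
Qed.

Lemma RZ_join_bdryE (x : V -> R) :
  RZ R (join_bdry A) x <-> forall i, in_sphere (A i) x.
Proof.
split.
  case=> s /mem_join_bdry[f [fA ->]] xs i.
  have [_ [a ai afi]] := properP (fA i).
  have aU : a \notin (\bigcup_(j < r) f j)%SET.
    apply/bigcupP => -[j _ afj]; have [ij|ij] := eqVneq i j.
      by rewrite -ij (negbTE afi) in afj.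
    have /fintype.subsetP/(_ _ afj) aj := proper_sub (fA j).
    by rewrite (disjointFl (A_disjoint ij) aj) in ai.
  split; last by exists a => //; exact: (xs a).2 aU.
  move=> v _; case: (boolP (v \in (\bigcup_(j < r) f j)%SET)).
    exact: (xs v).1.
  by case/(xs v).2 => ->; rewrite ?lexx ?ler01.
move=> xS; exists (\bigcup_(i < r) [set v in A i | 0 < x v < 1])%SET.
  apply/mem_join_bdry; eexists; split; last reflexivity.
  move=> i; apply/properP; split.
    by apply/fintype.subsetP => v; rewrite inE => /andP[].
  have [v vi xv] := (xS i).2; exists v => //.
  by rewrite inE vi; case: xv => ->; rewrite ?ltxx ?andbF.
move=> v; split.
  by case/bigcupP => j _; rewrite inE => /andP[vj _]; exact: (xS j).1.
have [j vj] := mem_cover v; have /andP[x0 x1] := (xS j).1 v vj.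
move=> vn; have : ~~ (0 < x v < 1).
  by apply: contra vn => xv; apply/bigcupP; exists j; rewrite // inE vj.
rewrite !lt_neqAle x0 x1 !andbT negb_and !negbK.
by case/orP => /eqP; [left | right].
Qed.

End Spheres.

Section Clamp.
Variable R : realDomainType.

Definition clamp01 (u : R) : R := Num.max 0 (Num.min 1 u).

Lemma clamp01_in01 u : 0 <= clamp01 u <= 1.
Proof. by rewrite /clamp01 le_max lexx ge_max ler01 ge_min lexx. Qed.

Lemma clamp01_le0 u : u <= 0 -> clamp01 u = 0.
Proof. by move=> u0; rewrite /clamp01 max_l // ge_min u0 orbT. Qed.

Lemma clamp01_ge1 u : 1 <= u -> clamp01 u = 1.
Proof. by move=> u1; rewrite /clamp01 min_l // max_r // ler01. Qed.

Lemma clamp01_id u : 0 <= u <= 1 -> clamp01 u = u.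
Proof. by case/andP => u0 u1; rewrite /clamp01 min_r // max_r. Qed.

End Clamp.

Section BlockDeformation.
Variables (R : realType) (V : finType) (r : nat) (A : 'I_r -> {set V}).

Definition block (v : V) : {set V} := (\bigcup_(j < r | v \in A j) A j)%SET.

Definition block_min (x : V -> R) (v : V) : R :=
  \big[Num.min/1]_(w in block v) x w.

Definition deform_shift (t : R) (x : V -> R) (v : V) : R :=
  (1 - t) * (1 - block_min x v).

(* At time t every coordinate of a block is moved by the clamped affine map
   u |-> (1 + 2s)(u - s), s = (1 - t)(1 - m), m the minimum over the block.
   It fixes 0; it keeps 1 at 1 while s <= 1/2, and pushes the block minimum
   to 0 once s > 1/2, so each sphere factor stays in its sphere.  At t = 0 a
   block containing a 0 has m = 0, s = 1 and collapses to the basepoint. *)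
Definition deform (t : R) (x : V -> R) (v : V) : R :=
  clamp01 ((1 + 2 * deform_shift t x v) * (x v - deform_shift t x v)).

Lemma block_min_le1 x v : block_min x v <= 1.
Proof.
rewrite /block_min; elim/big_rec: _ => [|w y _ y1]; first exact: lexx.
by rewrite ge_min y1 orbT.
Qed.

Lemma block_min_le x v w : w \in block v -> block_min x v <= x w.
Proof. by move=> wv; rewrite /block_min (bigD1 w) //= ge_min lexx. Qed.

Lemma block_min_ge0 x v :
  (forall w, w \in block v -> 0 <= x w) -> 0 <= block_min x v.
Proof.
move=> x0; rewrite /block_min; apply: (big_ind (fun y => 0 <= y)) => //.
by move=> a b a0 b0; rewrite le_min a0 b0.
Qed.

Lemma block_min_attained x v :
  block_min x v = 1 \/ exists2 w, w \in block v & block_min x v = x w.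
Proof.
rewrite /block_min.
apply: (big_ind (fun y => y = 1 \/ exists2 w, w \in block v & y = x w)).
- by left.
- by move=> a b ha hb; case: leP.
- by move=> w wv; right; exists w.
Qed.

Lemma deform_shift_ge0 t x v : t <= 1 -> 0 <= deform_shift t x v.
Proof.
by move=> t1; rewrite /deform_shift mulr_ge0 // subr_ge0 ?block_min_le1.
Qed.

Lemma deform1 x v : 0 <= x v <= 1 -> deform 1 x v = x v.
Proof.
move=> x01; rewrite /deform /deform_shift subrr mul0r mulr0 addr0 subr0 mul1r.
exact: clamp01_id.
Qed.

Lemma deform_fix0 t x v : t <= 1 -> x v = 0 -> deform t x v = 0.
Proof.
move=> t1 xv; rewrite /deform xv; apply: clamp01_le0.
have := deform_shift_ge0 x v t1; set s := deform_shift _ _ _ => s0; nra.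
Qed.

Hypothesis A_disjoint : forall i j, i != j -> [disjoint A i & A j]%B.

Lemma blockE i v : v \in A i -> block v = A i.
Proof.
move=> vi; apply/setP => w; apply/bigcupP/idP => [[j vj wj]|wi]; last first.
  by exists i.
have [->//|ij] := eqVneq i j.
by rewrite (disjointFr (A_disjoint ij) vi) in vj.
Qed.

Lemma deform0_collapse i x v w :
  v \in A i -> w \in A i -> x w = 0 ->
  (forall u, u \in A i -> 0 <= x u <= 1) -> deform 0 x v = 0.
Proof.
move=> vi wi xw x01.
have m0 : block_min x v = 0.
  apply/eqP; rewrite eq_le -{1}xw block_min_le ?(blockE vi) //=.
  by apply: block_min_ge0 => u; rewrite (blockE vi) => /x01/andP[].
rewrite /deform /deform_shift m0 !subr0 !mul1r; apply: clamp01_le0.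
by have /andP[_ xv1] := x01 v vi; lra.
Qed.

Lemma deform_in_sphere t x i :
  0 <= t <= 1 -> in_sphere (A i) x -> in_sphere (A i) (deform t x).
Proof.
case/andP=> t0 t1 [x01 [w wi xw]]; split=> [v _|]; first exact: clamp01_in01.
case: xw => xw; first by exists w => //; left; exact: deform_fix0.
have m1 := block_min_le1 x w; have s0 := deform_shift_ge0 x w t1.
have sm : deform_shift t x w <= 1 - block_min x w.
  by rewrite /deform_shift; nra.
have [sle|sgt] := lerP (deform_shift t x w) (1 / 2).
  exists w => //; right; rewrite /deform xw; apply: clamp01_ge1.
  by set s := deform_shift _ _ _ in s0 sle *; nra.
case: (block_min_attained x w) => [mw|[b bw mb]].
  by move: sgt; rewrite /deform_shift mw subrr mulr0; lra.
rewrite (blockE wi) in bw; exists b => //; left; rewrite /deform.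
have -> : deform_shift t x b = deform_shift t x w.
  by rewrite /deform_shift /block_min (blockE wi) (blockE bw).
apply: clamp01_le0; rewrite -mb.
set s := deform_shift _ _ _ in s0 sgt sm *.
by set m := block_min _ _ in sm *; nra.
Qed.

End BlockDeformation.

Local Open Scope classical_set_scope.

Section Continuity.
Variables (R : realType) (T : topologicalType).

Lemma continuous_bigmin (I : Type) (s : seq I) (P : pred I)
    (F : I -> T -> R) :
  (forall i, continuous (F i)) ->
  continuous (fun q => \big[Num.min/1%R]_(i <- s | P i) F i q).
Proof.
move=> cF; apply: continuous_big => // -[a b].
by apply: continuous_min; [exact: cvg_fst | exact: cvg_snd].
Qed.

Lemma continuous_clamp01 (f : T -> R) :
  continuous f -> continuous (fun q => clamp01 (f q)).
Proof.
move=> cf q.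
apply: (@continuous_max R T (fun=> 0%R) (fun q => Num.min 1%R (f q))).
  exact: cst_continuous.
by apply: (@continuous_min R T (fun=> 1%R) f);
  [exact: cst_continuous | exact: cf].
Qed.

Lemma continuous_ptws (V : finType) (f : T -> {ptws V -> R}) :
  (forall v, continuous (fun q => f q v)) -> continuous f.
Proof.
move=> cf q; apply/cvg_sup => v; apply/cvg_image.
  by rewrite eqEsubset; split => y // _; exists (fun=> y).
move=> B /= Bv; exists ((fun g : {ptws V -> R} => g v) @^-1` B).
  exact: cf.
by rewrite image_preimage // eqEsubset; split => y // _; exists (fun=> y).
Qed.

End Continuity.

Lemma continuous_eval (R : realType) (V : finType) (v : V) :
  continuous (fun f : {ptws V -> R} => f v).
Proof. exact: (@proj_continuous V (fun=> R) v). Qed.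

Lemma continuous_deform (R : realType) (V : finType) (r : nat)
    (A : 'I_r -> {set V}) (T : topologicalType)
    (t : T -> R) (x : T -> {ptws V -> R}) :
  continuous t -> continuous x ->
  continuous (fun q => deform A (t q) (x q) : {ptws V -> R}).
Proof.
move=> ct cx; have cxv w : continuous (fun q => x q w).
  by move=> q; exact: (continuous_comp (cx q) (@continuous_eval R V w (x q))).
have cst (c : R) : continuous (fun _ : T => c) := @cst_continuous T R c.
apply: continuous_ptws => v.
have cs : continuous (fun q => deform_shift A (t q) (x q) v).
  move=> q; apply: cvgM; first by apply: cvgB; [exact: cst | exact: ct].
  by apply: cvgB; [exact: cst | exact: continuous_bigmin].
apply: continuous_clamp01 => q.
apply: cvgM.
  by apply: cvgD; [exact: cst | apply: cvgM; [exact: cst | exact: cs]].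
by apply: cvgB; [exact: cxv | exact: cs].
Qed.

Lemma inclusion_homotopy_equivalence (R : realType) (X : topologicalType)
    (A B : set X) (H : R * X -> X) :
  A `<=` B -> continuous H ->
  (forall t x, (0 <= t <= 1)%R -> A x -> A (H (t, x))) ->
  (forall t x, (0 <= t <= 1)%R -> B x -> B (H (t, x))) ->
  (forall x, B x -> A (H (0%R, x))) ->
  (forall x, B x -> H (1%R, x) = x) ->
  homotopy_equivalence_on R A B id.
Proof.
move=> AB cH HA HB H0A H1.
have cH0 : continuous (fun x => H (0%R, x)).
  move=> x; apply: (@continuous_comp _ _ _ (fun y : X => (0%R, y)) H).
    exact: (@cvg_pair _ _ _ _ (nbhs (0%R : R)) (nbhs x) _ _ _ (fun=> 0%R) id
      (cvg_cst _) cvg_id).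
  exact: cH.
split => //; first by apply: continuous_subspaceT => x; exact: cvg_id.
exists (fun x => H (0%R, x)); split => //; first exact: continuous_subspaceT.
- by exists H; split => // [|x /AB]; [exact: continuous_subspaceT | exact: H1].
- by exists H; split => //; exact: continuous_subspaceT.
Qed.

Lemma RZfw_pred_card (R : realType) (V : finType) (K : {set {set V}}) :
  (0 < #|V|)%N ->
  RZfw R K #|V|.-1 = RZ R K `&` [set x | exists v, x v = 0%R].
Proof.
move=> V_gt0; rewrite /RZfw; have -> : (#|V| - #|V|.-1 = 1)%N.
  by case: #|V| V_gt0 => // n _; rewrite subSnn.
apply/seteqP; split => x [Kx x0]; split => //.
  by case/card_gt0P: x0 => v; rewrite inE => /eqP; exists v.
by case: x0 => v xv; apply/card_gt0P; exists v; rewrite inE /= xv.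
Qed.

Section FatWedgeRetraction.
Variables (R : realType) (V : finType) (r : nat) (A : 'I_r -> {set V}).
Hypothesis A_neq0 : forall i, A i != finset.set0.
Hypothesis A_disjoint : forall i j, i != j -> [disjoint A i & A j]%B.
Hypothesis A_cover : (\bigcup_(i < r) A i = [set: V])%SET.

(* RZ_L^{n-1}, by RZfw_pred_card. *)
Let RZ0 := RZ R (join_bdry A) `&` [set x | exists v, x v = 0].

Lemma fat_wedge_sub : fat_wedge R A `<=` RZ0.
Proof.
move=> x [Lx [i xi]]; split=> //.
by have /finset.set0Pn[v vi] := A_neq0 i; exists v; exact: xi.
Qed.

Lemma deform_RZ t x : 0 <= t <= 1 -> RZ R (join_bdry A) x ->
  RZ R (join_bdry A) (deform A t x).
Proof.
move=> t01 /(RZ_join_bdryE A_disjoint A_cover) xS.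
by apply/(RZ_join_bdryE A_disjoint A_cover) => i; exact: deform_in_sphere.
Qed.

Lemma deform_fat_wedge t x : 0 <= t <= 1 -> fat_wedge R A x ->
  fat_wedge R A (deform A t x).
Proof.
move=> t01 [Lx [i xi]]; split; first exact: deform_RZ.
by exists i => v vi; apply: deform_fix0; [case/andP: t01 | exact: xi].
Qed.

Lemma deform_RZ0 t x : 0 <= t <= 1 -> RZ0 x -> RZ0 (deform A t x).
Proof.
move=> t01 [Lx [v xv]]; split; first exact: deform_RZ.
by exists v; apply: deform_fix0 => //; case/andP: t01.
Qed.

Lemma deform0_fat_wedge x : RZ0 x -> fat_wedge R A (deform A 0 x).
Proof.
move=> [Lx [w xw]]; split; first by apply: deform_RZ; rewrite // lexx ler01.
have [i wi] := mem_cover A_cover w; exists i => v vi.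
have /(RZ_join_bdryE A_disjoint A_cover)/(_ i) [x01 _] := Lx.
exact: deform0_collapse vi wi xw x01.
Qed.

Lemma deform1_RZ x : RZ R (join_bdry A) x -> deform A 1 x = x.
Proof.
move=> /(RZ_join_bdryE A_disjoint A_cover) xS; apply/funext => v.
have [i vi] := mem_cover A_cover v; exact/deform1/(xS i).1.
Qed.

End FatWedgeRetraction.

Theorem lemma4p3 (R : realType) (V : finType) (r : nat)
  (A : 'I_r -> {set V}) :
  (0 < r)%N ->
  (forall i, A i != finset.set0) ->
  (forall i j, i != j -> [disjoint A i & A j]%B) ->
  (\bigcup_(i < r) A i = [set: V])%SET ->
  RZ R (join_bdry A) =
    [set x : {ptws V -> R} | forall i : 'I_r,
       RZ R (bdry_simplex [set: vert (A i)]) (fun a => x (val a))]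
  /\
  homotopy_equivalence_on R (fat_wedge R A)
    (RZfw R (join_bdry A) (\sum_(i < r) #|A i|).-1) id.
Proof.
move=> r_gt0 A_neq0 A_disjoint A_cover.
split.
  have RZE := RZ_join_bdryE A_disjoint A_cover.
  apply/seteqP; split=> x /=.
    by move/RZE => xS i; exact/RZ_bdry_vertE.
  by move=> xS; apply/RZE => i; exact/RZ_bdry_vertE.
have cardV : (\sum_(i < r) #|A i|)%N = #|V|.
  by rewrite -card_bigcup_disjoint // A_cover cardsT.
have V_gt0 : (0 < #|V|)%N.
  have /finset.set0Pn[v _] := A_neq0 (Ordinal r_gt0).
  by apply/card_gt0P; exists v.
rewrite cardV RZfw_pred_card //.
apply: (inclusion_homotopy_equivalence
         (H := fun p : R * {ptws V -> R} => deform A p.1 p.2 : {ptws V -> R})).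
- exact: fat_wedge_sub.
- by apply: continuous_deform => p; [exact: cvg_fst | exact: cvg_snd].
- by move=> t x; exact: deform_fat_wedge.
- by move=> t x; exact: deform_RZ0.
- by move=> x; exact: deform0_fat_wedge.
- by move=> x [Lx _]; exact: deform1_RZ.
Qed.
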